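(* For all integers $k,n\ge 1$, in the algebra $\mathfrak{H}=\mathbb{Q}\langle x,y\rangle$, $$S(z_{k+1}z_1^{\,n})=\sum_{t=1}^{n+1}\ \sum_{\substack{a_1+a_2+\dots+a_t=n+1-t\\ a_i\ge 0,\ i=1,\dots,t}} z_{a_t+k+1}\,z_{a_1+1}\,z_{a_2+1}\cdots z_{a_{t-1}+1}.$$
   Context: $\mathfrak{H}=\mathbb{Q}\langle x,y\rangle$ is the algebra of noncommutative polynomials in letters $x,y$ over $\mathbb{Q}$; $A^*$ denotes the set of words in $x,y$ including the empty word $1$. For a positive integer $k$, $z_k=x^{k-1}y$. Let $\sigma$ be the algebra automorphism of $\mathfrak{H}$ with $\sigma(x)=x$, $\sigma(y)=x+y$. The $\mathbb{Q}$-linear map $S:\mathfrak{H}\to\mathfrak{H}$ is defined by $S(1)=1$ and $S(wa)=\sigma(w)a$ for every word $w\in A^*$ and letter $a\in\{x,y\}$. For $t=1$ the word on the right is just $z_{a_1+k+1}$. *)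

(* The free algebra H = Q<x,y> is modelled by coefficient
   functions  word -> rat  (a polynomial sum_w c_w w is the map w |-> c_w);
   all elements appearing below have finite support. *)
From HB Require Import structures.
From mathcomp Require Import all_boot all_order all_algebra.
Set Implicit Arguments. Unset Strict Implicit. Unset Printing Implicit Defensive.
Import Order.TTheory GRing.Theory Num.Theory.
Local Open Scope ring_scope.

Inductive letter := lx | ly.
Definition letter_eqb (a b : letter) : bool :=
  match a, b with lx, lx | ly, ly => true | _, _ => false end.
Lemma letter_eqP : Equality.axiom letter_eqb.
Proof. by case; case; constructor. Qed.
HB.instance Definition _ := hasDecEq.Build letter letter_eqP.

Definition word := seq letter.

Definition H := word -> rat.

Definition pword (w : word) : H := fun u => (u == w)%:R.
Definition padd (p q : H) : H := fun u => p u + q u.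
Definition pmul (p q : H) : H :=
  fun w => \sum_(i < (size w).+1) p (take i w) * q (drop i w).

Definition sigma_letter (a : letter) : H :=
  match a with lx => pword [:: lx] | ly => padd (pword [:: lx]) (pword [:: ly]) end.
Fixpoint sigma_word (w : word) : H :=
  match w with [::] => pword [::] | a :: w' => pmul (sigma_letter a) (sigma_word w') end.

(* S(1) = 1, S(w a) = sigma(w) a, on words (S is the linear extension) *)
Definition S_word (w : word) : H :=
  match w with
  | [::] => pword [::]
  | a :: w' => pmul (sigma_word (belast a w')) (pword [:: last a w'])
  end.

Definition z (k : nat) : word := rcons (nseq k.-1 lx) ly.

(* S(x^k y^(n+1)) = sigma(x^k y^n) y = x^k (x + y)^n y is the sum, with coefficient 1, of
   the words of length k + n + 1 that begin with x^k and end with y.  Cutting such a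
   word after each y writes it uniquely as a product of blocks x^m y = z_(m+1); the
   first block has m >= k, i.e. m = a_t + k, and the total length forces
   a_1 + ... + a_t = n + 1 - t.  These are exactly the words of the right-hand side. *)

From mathcomp Require Import all_boot all_order all_algebra zify.
From Stdlib Require Import FunctionalExtensionality.
Import GRing.Theory.
Local Open Scope ring_scope.

Lemma pmul_pwordl (v w u : word) (q : H) : size w = size v ->
  pmul (pword v) q (w ++ u) = (w == v)%:R * q u.
Proof.
move=> szw; have le_wu : (size w < (size (w ++ u)).+1)%N by rewrite size_cat ltnS leq_addr.
rewrite /pmul (bigD1 (Ordinal le_wu)) //= take_size_cat // drop_size_cat //.
rewrite /pword big1 ?addr0 // => -[i lt_i]; rewrite -val_eqE /= => ne_iw.
case: eqP => [take_iv | _]; last by rewrite mul0r.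
by move: szw lt_i ne_iw; rewrite -take_iv size_take_min size_cat; lia.
Qed.

Lemma pmul_pwordr (p : H) (v u w : word) : size w = size v ->
  pmul p (pword v) (u ++ w) = (w == v)%:R * p u.
Proof.
move=> szw; have le_uw : (size u < (size (u ++ w)).+1)%N by rewrite size_cat ltnS leq_addr.
rewrite /pmul (bigD1 (Ordinal le_uw)) //= take_size_cat // drop_size_cat //.
rewrite /pword mulrC big1 ?addr0 // => -[i lt_i]; rewrite -val_eqE /= => ne_iu.
case: eqP => [drop_iv | _]; last by rewrite mulr0.
by move: szw lt_i ne_iu; rewrite -drop_iv size_drop size_cat; lia.
Qed.

Lemma pmul_paddl (p p' q : H) (u : word) :
  pmul (padd p p') q u = pmul p q u + pmul p' q u.
Proof. by rewrite /pmul -big_split; apply: eq_bigr => i _; rewrite /padd mulrDl. Qed.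

Arguments sigma_letter : simpl never.

Lemma pmul_sigma_letter_nil (a : letter) (q : H) : pmul (sigma_letter a) q [::] = 0.
Proof. by case: a; rewrite /pmul big_ord1 /= /padd /pword /= ?addr0 mul0r. Qed.

Lemma pmul_sigma_letter_cons (a b : letter) (q : H) (u : word) :
  pmul (sigma_letter a) q (b :: u) = ((b == lx) || (a == ly))%:R * q u.
Proof.
have pmul_x c : pmul (pword [:: c]) q (b :: u) = (b == c)%:R * q u.
  by rewrite -[b :: u]cat1s pmul_pwordl // eqseq_cons andbT.
case: a => /=; first by rewrite pmul_x orbF.
by rewrite pmul_paddl !pmul_x orbT; case: b {pmul_x}; rewrite /= mul0r ?addr0 ?add0r.
Qed.

Lemma sigma_word_nseq_ly (n : nat) (u : word) :
  sigma_word (nseq n ly) u = (size u == n)%:R.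
Proof.
elim: n u => [|n IHn] [|b u] //=.
  by rewrite pmul_sigma_letter_nil.
by rewrite pmul_sigma_letter_cons orbT IHn mul1r.
Qed.

Lemma sigma_word_xy (k n : nat) (u : word) :
  sigma_word (nseq k lx ++ nseq n ly) u =
  ((size u == k + n)%N && (take k u == nseq k lx))%:R.
Proof.
elim: k u => [|k IHk] u /=; first by rewrite take0 andbT sigma_word_nseq_ly.
case: u => [|b u]; first by rewrite pmul_sigma_letter_nil.
by rewrite pmul_sigma_letter_cons orbF IHk -natrM mulnb eqseq_cons andbCA.
Qed.

Lemma S_word_rcons (w : word) (c : letter) :
  S_word (rcons w c) = pmul (sigma_word w) (pword [:: c]).
Proof. by case: w => [|a w] //=; rewrite belast_rcons last_rcons. Qed.

Lemma zS_flatten_nseq_z1 (k n : nat) :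
  z k.+1 ++ flatten (nseq n (z 1)) = rcons (nseq k lx ++ nseq n ly) ly.
Proof. by rewrite /= cat_rcons rcons_cat; congr (_ ++ _); elim: n => //= n ->. Qed.

Definition S_support (k n : nat) (u : word) : bool :=
  [&& size u == (k + n).+1, take k u == nseq k lx & last lx u == ly].

Lemma S_word_xy (k n : nat) (u : word) :
  S_word (rcons (nseq k lx ++ nseq n ly) ly) u = (S_support k n u)%:R.
Proof.
rewrite S_word_rcons /S_support; case/lastP: u => [|u b].
  by rewrite /pmul big_ord1 /pword mulr0.
rewrite -cats1 pmul_pwordr // sigma_word_xy size_cat last_cat addn1 eqSS.
rewrite eqseq_cons andbT -natrM mulnb andbC; case: eqP => //= sz_u.
by rewrite takel_cat // sz_u leq_addr.
Qed.

Definition blocks (s : seq nat) : word := flatten [seq z m.+1 | m <- s].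

Lemma blocks_cons (m : nat) (s : seq nat) :
  blocks (m :: s) = nseq m lx ++ ly :: blocks s.
Proof. by rewrite /blocks /= cat_rcons. Qed.

Lemma size_blocks (s : seq nat) : size (blocks s) = (sumn s + size s)%N.
Proof.
by elim: s => // m s IHs; rewrite blocks_cons size_cat /= size_nseq IHs !addnS addnA.
Qed.

Lemma blocks_inj : injective blocks.
Proof.
elim=> [|m s IHs] [|m' s'] //; rewrite ?blocks_cons; [by case: m' | by case: m |].
elim: m m' => [|m IHm] [|m'] //= [].
  by move=> /IHs ->.
by move=> /IHm [-> ->].
Qed.

Lemma last_blocks (x : letter) (s : seq nat) : s != [::] -> last x (blocks s) = ly.
Proof.
by case/lastP: s => // s m _; rewrite /blocks map_rcons flatten_rcons last_cat last_rcons.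
Qed.

Lemma take_blocks (k m : nat) (s : seq nat) : (k <= m)%N ->
  take k (blocks (m :: s)) = nseq k lx.
Proof.
by move=> le_km; rewrite blocks_cons -(subnKC le_km) nseqD -catA take_size_cat ?size_nseq.
Qed.

Lemma blocks_of_last_ly (u : word) : last lx u = ly -> exists m s, u = blocks (m :: s).
Proof.
elim: u => [|a u IHu] //; case: u IHu => [|b u] IHu /=.
  by move->; exists 0%N, [::].
move/IHu => [m [s ->]]; case: a.
  by exists m.+1, s; rewrite !blocks_cons.
by exists 0%N, (m :: s); rewrite !blocks_cons.
Qed.

Lemma mem_leq_sumn (s : seq nat) (m : nat) : m \in s -> (m <= sumn s)%N.
Proof. by move/perm_to_rem/perm_sumn => ->; apply: leq_addr. Qed.

Lemma sum_indicator_inj (R : nzSemiRingType) (T : finType) (X : eqType) (C : pred T)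
    (f : T -> X) (a0 : T) :
  C a0 -> {in C &, injective f} -> \sum_(a | C a) (f a == f a0)%:R = 1 :> R.
Proof.
move=> C_a0 inj_f; rewrite (bigD1 a0) //= eqxx big1 ?addr0 // => a /andP [C_a ne_a].
by case: eqP => // /inj_f eq_a; rewrite eq_a ?eqxx in ne_a.
Qed.

Definition block_exps (k : nat) {n t : nat} (a : {ffun 'I_t.+1 -> 'I_n.+1}) : seq nat :=
  (a ord_max + k)%N :: [seq (a (widen_ord (leqnSn t) i) : nat) | i : 'I_t].

Section BlockExponents.

Context (k : nat) {n t : nat}.
Implicit Type a : {ffun 'I_t.+1 -> 'I_n.+1}.

Lemma blocks_block_exps a :
  z (a ord_max + k + 1) ++ flatten [seq z (a (widen_ord (leqnSn t) i) + 1) | i : 'I_t]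
  = blocks (block_exps k a).
Proof.
rewrite /blocks /= -map_comp addn1; congr (_ ++ flatten _).
by apply: eq_map => i /=; rewrite addn1.
Qed.

Lemma size_block_exps a : size (block_exps k a) = t.+1.
Proof. by rewrite /= size_map size_enum_ord. Qed.

Lemma sumn_block_exps a : sumn (block_exps k a) = (k + \sum_(i < t.+1) a i)%N.
Proof.
by rewrite /= sumnE big_map big_enum big_ord_recr /= addnAC addnC [(_ + a ord_max)%N]addnC.
Qed.

Lemma block_exps_inj : injective (@block_exps k n t).
Proof.
move=> a a' [/addIn eq_max /eq_in_map eq_widen]; apply/ffunP => i.
have [lt_it | ge_it] := ltnP i t.
  have -> : i = widen_ord (leqnSn t) (Ordinal lt_it) by apply: val_inj.
  by apply: val_inj; apply: eq_widen; rewrite mem_enum.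
have -> : i = ord_max by apply/val_inj/eqP; rewrite eqn_leq ge_it -ltnS ltn_ord.
exact: val_inj.
Qed.

Lemma S_support_block_exps a : (\sum_(i < t.+1) (a i : nat))%N == (n.+1 - t.+1)%N ->
  (t < n.+1)%N -> S_support k n (blocks (block_exps k a)).
Proof.
move=> /eqP sum_a lt_tn; rewrite /S_support last_blocks // take_blocks ?leq_addl //.
by rewrite size_blocks sumn_block_exps size_block_exps sum_a !eqxx andbT; apply/eqP; lia.
Qed.

End BlockExponents.

Lemma block_exps_of_S_support (k n : nat) (u : word) : S_support k n u ->
  exists (t : 'I_n.+1) (a : {ffun 'I_t.+1 -> 'I_n.+1}),
    ((\sum_(i < t.+1) (a i : nat))%N == (n.+1 - t.+1)%N) && (blocks (block_exps k a) == u).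
Proof.
case/and3P => /eqP sz_u /eqP take_u /eqP last_u.
(* Cutting [drop k u] rather than [u] makes the first exponent automatically >= k. *)
have [m [s drop_u]] : exists m s, drop k u = blocks (m :: s).
  apply: blocks_of_last_ly; move: last_u.
  rewrite -{1}(cat_take_drop k u) last_cat take_u.
  suff -> : last lx (nseq k lx) = lx by [].
  by elim: k {sz_u take_u}.
have u_blocks : u = blocks ((m + k)%N :: s).
  by rewrite -(cat_take_drop k u) take_u drop_u !blocks_cons addnC nseqD catA.
have size_s : (m + sumn s + size s = n)%N.
  by move: sz_u; rewrite u_blocks size_blocks /=; lia.
have lt_sn : (size s < n.+1)%N by lia.
have nth_lt i : (nth m s i < n.+1)%N.
  have [lt_is | ge_is] := ltnP i (size s); last by rewrite nth_default //; lia.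
  by apply: leq_ltn_trans (mem_leq_sumn _ _ (mem_nth m lt_is)) _; lia.
(* The default [m] of [nth] puts a_t = m at index t = size s. *)
pose a : {ffun 'I_(size s).+1 -> 'I_n.+1} := [ffun i : 'I_(size s).+1 => inord (nth m s i)].
have exps_a : block_exps k a = (m + k)%N :: s.
  rewrite /block_exps ffunE inordK // nth_default //; congr (_ :: _).
  rewrite -[RHS](mkseq_nth m) /mkseq -val_enum_ord -map_comp.
  by apply: eq_map => i /=; rewrite ffunE inordK.
exists (Ordinal lt_sn), a; rewrite exps_a -u_blocks eqxx andbT; apply/eqP.
by have := sumn_block_exps k a; rewrite exps_a /=; lia.
Qed.

Lemma sum_block_exps_indicator (k n : nat) (u : word) :
  \sum_(t < n.+1)
     \sum_(a : {ffun 'I_t.+1 -> 'I_n.+1}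
             | (\sum_(i < t.+1) (a i : nat))%N == (n.+1 - t.+1)%N)
       (blocks (block_exps k a) == u)%:R
  = (S_support k n u)%:R :> rat.
Proof.
have [supp_u | not_supp_u] := boolP (S_support k n u); last first.
  rewrite big1 // => t _; rewrite big1 // => a sum_a.
  by case: eqP => // eq_u; rewrite -eq_u S_support_block_exps in not_supp_u.
have [t0 [a0 /andP [sum_a0 /eqP <-]]] := block_exps_of_S_support k n u supp_u.
rewrite (bigD1 t0) //= sum_indicator_inj //; last first.
  by move=> a a' _ _ /blocks_inj /block_exps_inj.
rewrite big1 ?addr0 // => t ne_t; rewrite big1 // => a _.
case: eqP => // /blocks_inj /(congr1 size); rewrite !size_block_exps => -[eq_t].
by rewrite -val_eqE /= eq_t eqxx in ne_t.
Qed.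

(* t ranges over 1..n+1, written t.+1 with t < n+1; a : 'I_t.+1 -> nat
   encoded with values in 'I_n.+1 (automatic since a_i <= n+1-t <= n);
   a ord_max is a_t and a (widen i), i < t, is a_(i+1). *)
Theorem lemma2p2 (k n : nat) (hk : (1 <= k)%N) (hn : (1 <= n)%N) :
  S_word (z k.+1 ++ flatten (nseq n (z 1))) =
  (fun u : word =>
     \sum_(t < n.+1)
       \sum_(a : {ffun 'I_t.+1 -> 'I_n.+1}
               | (\sum_(i < t.+1) (a i : nat))%N == (n.+1 - t.+1)%N)
         pword (z (a ord_max + k + 1)
                ++ flatten [seq z (a (widen_ord (leqnSn t) i) + 1) | i : 'I_t])
               u).
Proof.
apply: functional_extensionality => u.
rewrite zS_flatten_nseq_z1 S_word_xy -sum_block_exps_indicator.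
by apply: eq_bigr => t _; apply: eq_bigr => a _; rewrite blocks_block_exps /pword eq_sym.
Qed.
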